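(* Let $N \in \mathbb{R}^{n \times r}$, $V \in \mathbb{R}^{r \times n}$, and for $\kappa\in\mathbb{R}^r_+$ let $f_\kappa\colon\mathbb{R}^n_+\to\mathbb{R}^n$, $f_\kappa(x) = N_\kappa x^V$. Let $S = \mathrm{im}(N)$ and $s = \mathrm{rank}(N)$. The following are equivalent: (inj) for all $\kappa\in\mathbb{R}^r_+$ and all $x'\in\mathbb{R}^n_+$, $f_\kappa$ is injective on $(x'+S)\cap\mathbb{R}^n_+$; (jac) for all $\kappa \in \mathbb{R}^r_+$ and $x \in \mathbb{R}^n_+$, the Jacobian matrix $J_{f_\kappa}(x)$ is injective on $S$; (min) for all $I\subseteq [n]$, $J\subseteq [r]$ of cardinality $s$, the product $\det(N_{I,J}) \det(V_{J,I})$ either is zero or has the same sign as all other nonzero such products, and at least one such product is nonzero; (sig) $\sigma(\ker(N)) \cap \sigma(V(\Sigma(S^* ))) = \emptyset$.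
   Context: $\mathbb{R}_+$ denotes the strictly positive reals. $(x^V)_j=\prod_i x_i^{v_{ji}}$ (real exponents), $N_\kappa=N\,\mathrm{diag}(\kappa)$, $[n]=\{1,\dots,n\}$, $M_{K,L}$ is the submatrix with rows in $K$ and columns in $L$. $\sigma$ is the componentwise sign vector; for $T\subseteq\mathbb{R}^k$, $\sigma(T)=\{\sigma(x)\mid x\in T\}$ and $\Sigma(T)=\sigma^{-1}(\sigma(T))$; $S^*=S\setminus\{0\}$; $V(T)=\{Vx\mid x\in T\}$. *)

From HB Require Import structures.
From Stdlib Require Import Reals Lra.
From Stdlib Require Import Classical ClassicalEpsilon FunctionalExtensionality.
From mathcomp Require Import all_boot all_algebra.

Set Implicit Arguments.
Unset Strict Implicit.
Unset Printing Implicit Defensive.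

Local Open Scope R_scope.

Definition Req_bool (x y : R) : bool := if Req_EM_T x y then true else false.

Lemma Req_boolP : Equality.axiom Req_bool.
Proof. move=> x y; rewrite /Req_bool; case: Req_EM_T => H; by constructor. Qed.

HB.instance Definition _ := hasDecEq.Build R Req_boolP.

Definition R_find (P : pred R) (n : nat) : option R :=
  match excluded_middle_informative (exists x, P x) with
  | left H => Some (proj1_sig (constructive_indefinite_description _ H))
  | right _ => None
  end.

Lemma R_find_correct P n x : R_find P n = Some x -> P x.
Proof.
rewrite /R_find; case: excluded_middle_informative => // H [<-].
exact: proj2_sig (constructive_indefinite_description _ H).
Qed.

Lemma R_find_complete (P : pred R) : (exists x, P x) -> exists n, R_find P n.
Proof.
move=> H; exists 0%N; rewrite /R_find; case: excluded_middle_informative => //.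
Qed.

Lemma R_find_ext (P Q : pred R) : P =1 Q -> R_find P =1 R_find Q.
Proof. move=> /functional_extensionality -> //. Qed.

HB.instance Definition _ :=
  hasChoice.Build R R_find_correct R_find_complete R_find_ext.

Lemma R_addA : associative Rplus. Proof. move=> *; ring. Qed.
Lemma R_addC : commutative Rplus. Proof. move=> *; ring. Qed.
Lemma R_add0 : left_id 0 Rplus. Proof. move=> *; ring. Qed.
Lemma R_addN : left_inverse 0 Ropp Rplus. Proof. move=> *; ring. Qed.

HB.instance Definition _ := GRing.isZmodule.Build R R_addA R_addC R_add0 R_addN.

Lemma R_mulA : associative Rmult. Proof. move=> *; ring. Qed.
Lemma R_mulC : commutative Rmult. Proof. move=> *; ring. Qed.
Lemma R_mul1 : left_id 1 Rmult. Proof. move=> *; ring. Qed.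
Lemma R_mulDl : left_distributive Rmult Rplus. Proof. move=> *; ring. Qed.
Lemma R_one_neq0 : ((1:R) != (0:R)).
Proof. apply/eqP; exact R1_neq_R0. Qed.

HB.instance Definition _ :=
  GRing.Zmodule_isComNzRing.Build R R_mulA R_mulC R_mul1 R_mulDl R_one_neq0.

Definition R_inv (x : R) : R := if Req_EM_T x 0 then 0 else Rinv x.

Lemma R_mulV (x : R) : x != 0 -> GRing.mul (R_inv x) x = 1.
Proof.
move=> /eqP H; rewrite /R_inv.
destruct (Req_EM_T x 0) as [E|E]; first by [].
change (Rmult (Rinv x) x = 1); field; exact E.
Qed.

Lemma R_inv0 : R_inv 0 = 0.
Proof. by rewrite /R_inv; case: Req_EM_T. Qed.

HB.instance Definition _ := GRing.ComNzRing_isField.Build R R_mulV R_inv0.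

Local Open Scope ring_scope.

Definition positive (k : nat) (x : 'cV[R]_k) : Prop :=
  forall i, Rlt R0 (x i 0).

Definition monom (n r : nat) (V : 'M[R]_(r, n)) (x : 'cV[R]_n) : 'cV[R]_r :=
  \col_j \prod_(i < n) Rpower (x i 0) (V j i).

Definition Nkappa (n r : nat) (N : 'M[R]_(n, r)) (kappa : 'cV[R]_r) : 'M[R]_(n, r) :=
  N *m diag_mx kappa^T.

Definition fk (n r : nat) (N : 'M[R]_(n, r)) (V : 'M[R]_(r, n))
  (kappa : 'cV[R]_r) (x : 'cV[R]_n) : 'cV[R]_n :=
  Nkappa N kappa *m monom V x.

Definition imN (n r : nat) (N : 'M[R]_(n, r)) (v : 'cV[R]_n) : Prop :=
  exists w : 'cV[R]_r, v = N *m w.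

Definition kerN (n r : nat) (N : 'M[R]_(n, r)) (u : 'cV[R]_r) : Prop :=
  N *m u = 0.

Definition is_jacobian (n : nat) (F : 'cV[R]_n -> 'cV[R]_n) (x : 'cV[R]_n)
  (J : 'M[R]_n) : Prop :=
  forall i j : 'I_n,
    derivable_pt_lim
      (fun t : R => F (x + (t - x j 0) *: delta_mx j 0) i 0) (x j 0) (J i j).

Definition Rsgn (a : R) : int :=
  if Rlt_dec R0 a then 1%Z else if Rlt_dec a R0 then (-1)%Z else 0%Z.

Definition sigma (k : nat) (x : 'cV[R]_k) : {ffun 'I_k -> int} :=
  [ffun i => Rsgn (x i 0)].

Definition sigma_set (k : nat) (T : 'cV[R]_k -> Prop) (s : {ffun 'I_k -> int}) : Prop :=
  exists x, T x /\ sigma x = s.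

Definition Sigma (k : nat) (T : 'cV[R]_k -> Prop) (x : 'cV[R]_k) : Prop :=
  sigma_set T (sigma x).

Definition nonzero_part (k : nat) (T : 'cV[R]_k -> Prop) (x : 'cV[R]_k) : Prop :=
  T x /\ x <> 0.

Definition mx_image (k m : nat) (V : 'M[R]_(m, k)) (T : 'cV[R]_k -> Prop)
  (y : 'cV[R]_m) : Prop :=
  exists x, T x /\ y = V *m x.

(* a subset of [k] of cardinality s, given as a strictly increasing map *)
Definition incr (s k : nat) (f : 'I_s -> 'I_k) : Prop :=
  forall a b : 'I_s, (a < b)%N -> (f a < f b)%N.

Definition minor_prod (n r s : nat) (N : 'M[R]_(n, r)) (V : 'M[R]_(r, n))
  (I : 'I_s -> 'I_n) (J : 'I_s -> 'I_r) : R :=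
  \det (mxsub I J N) * \det (mxsub J I V).

Definition cond_inj (n r : nat) (N : 'M[R]_(n, r)) (V : 'M[R]_(r, n)) : Prop :=
  forall kappa : 'cV[R]_r, positive kappa ->
  forall x' : 'cV[R]_n, positive x' ->
  forall x y : 'cV[R]_n,
    imN N (x - x') -> positive x ->
    imN N (y - x') -> positive y ->
    fk N V kappa x = fk N V kappa y -> x = y.

Definition cond_jac (n r : nat) (N : 'M[R]_(n, r)) (V : 'M[R]_(r, n)) : Prop :=
  forall kappa : 'cV[R]_r, positive kappa ->
  forall x : 'cV[R]_n, positive x ->
  forall J : 'M[R]_n, is_jacobian (fk N V kappa) x J ->
  forall v w : 'cV[R]_n, imN N v -> imN N w -> J *m v = J *m w -> v = w.

Definition cond_min (n r : nat) (N : 'M[R]_(n, r)) (V : 'M[R]_(r, n)) : Prop :=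
  let s := \rank N in
  (forall (I I' : 'I_s -> 'I_n) (J J' : 'I_s -> 'I_r),
     incr I -> incr J -> incr I' -> incr J' ->
     minor_prod N V I J <> 0 -> minor_prod N V I' J' <> 0 ->
     (Rlt R0 (minor_prod N V I J) <-> Rlt R0 (minor_prod N V I' J')))
  /\ (exists (I : 'I_s -> 'I_n) (J : 'I_s -> 'I_r),
        incr I /\ incr J /\ minor_prod N V I J <> 0).

Definition cond_sig (n r : nat) (N : 'M[R]_(n, r)) (V : 'M[R]_(r, n)) : Prop :=
  forall s : {ffun 'I_r -> int},
    ~ (sigma_set (kerN N) s /\
       sigma_set (mx_image V (Sigma (nonzero_part (imN N)))) s).

(* Everything is compared with (sig), recast as the absence of a
   sign obstruction (u, z, w): N u = 0, 0 <> z in S, sign z = sign w and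
   sign u = sign (V w).
   - (inj) <-> (sig): for positive x, y the signs of x - y and of
     log x - log y agree, and so do those of x^V - y^V and V (log x - log y);
     since vectors of equal signs differ by a positive diagonal rescaling, a
     collision f_kappa(x) = f_kappa(y) and an obstruction determine each other.
   - (jac) <-> (sig): the Jacobian is N diag(kappa x^V) V diag(1/x), and the
     same rescaling argument matches its kernel on S with obstructions.
   - (jac) <-> (min): with a full-rank factorization N = Z A (s = rank N) the
     Jacobian is injective on S iff det(A diag(a) V diag(b) Z) <> 0, where
     (a, b) = (kappa x^V, 1/x) ranges over all positive vectors.  By
     Cauchy-Binet this determinant is sum_{I,J} det N_{I,J} det V_{J,I} a^J b^I,
     and a polynomial of this squarefree shape has no positive zero iff its
     nonzero coefficients share one sign and one of them is nonzero: one sign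
     gives a positive sum; opposite signs at (I1, J1), (I2, J2) give a zero by
     the intermediate value theorem on a path joining the indicator points of
     the two pairs, where the polynomial takes these two coefficients. *)

From Pilot Require Import Defs.
From HB Require Import structures.
From Stdlib Require Import Reals Lra.
From Stdlib Require Import Classical FunctionalExtensionality.
From mathcomp Require Import all_boot all_algebra fingroup perm.
(* Let [positive] refer to the positive orthant of Defs, not to BinNums. *)
Import Defs.
Set Implicit Arguments.
Unset Strict Implicit.
Unset Printing Implicit Defensive.
Import GRing.Theory.
Local Open Scope ring_scope.

Section IncreasingMaps.
Variables s m : nat.

Definition incrb (g : {ffun 'I_s -> 'I_m}) : bool :=
  [forall a : 'I_s, forall b : 'I_s, (a < b)%N ==> (g a < g b)%N].

Lemma incrbP (g : {ffun 'I_s -> 'I_m}) : reflect (incr g) (incrb g).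
Proof.
apply: (iffP forallP) => [H a b ab | H a].
  by have /forallP/(_ b)/implyP := H a; apply.
by apply/forallP => b; apply/implyP; exact: H.
Qed.

Lemma incr_inj (f : 'I_s -> 'I_m) : incr f -> injective f.
Proof.
move=> H a b E; apply/eqP; case: (ltngtP a b) => [ab|ba|/val_inj->//].
- by have := H _ _ ab; rewrite E ltnn.
- by have := H _ _ ba; rewrite E ltnn.
Qed.

Let ord_lt k : rel 'I_k := fun a b => (a < b)%N.

Let enum_ord_sorted k : sorted (@ord_lt k) (enum 'I_k).
Proof.
have: sorted ltn (map val (enum 'I_k)) by rewrite val_enum_ord; exact: iota_ltn_sorted.
by rewrite sorted_map.
Qed.

Lemma incr_sorted (f : 'I_s -> 'I_m) : incr f -> sorted (@ord_lt m) (map f (enum 'I_s)).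
Proof.
by move=> H; rewrite sorted_map; apply: sub_sorted (enum_ord_sorted s) => a b; exact: H.
Qed.

Lemma incr_eq (g h : 'I_s -> 'I_m) : incr g -> incr h ->
  (forall k, exists k', g k = h k') -> g =1 h.
Proof.
move=> Hg Hh Hsub.
have ug : uniq (map g (enum 'I_s)) by rewrite map_inj_uniq ?enum_uniq //; exact: incr_inj.
have uh : uniq (map h (enum 'I_s)) by rewrite map_inj_uniq ?enum_uniq //; exact: incr_inj.
have sub : {subset map g (enum 'I_s) <= map h (enum 'I_s)}.
  by move=> x /mapP [k _ ->]; have [k' ->] := Hsub k; exact: map_f (mem_enum _ _).
have [|_ same_elems] := uniq_min_size ug sub; first by rewrite !size_map.
have ltT : transitive (@ord_lt m) by move=> y x z; exact: ltn_trans.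
have ltI : irreflexive (@ord_lt m) by move=> a; exact: ltnn.
have /eq_in_map E := irr_sorted_eq ltT ltI (incr_sorted Hg) (incr_sorted Hh) same_elems.
by move=> k; apply: E; exact: mem_enum.
Qed.

Lemma injective_incr_perm (f : 'I_s -> 'I_m) : injective f ->
  exists (g : {ffun 'I_s -> 'I_m}) (t : 'S_s), incr g /\ forall i, f i = g (t i).
Proof.
move=> finj.
pose e := [seq x <- enum 'I_m | x \in codom f].
have ltT : transitive (@ord_lt m) by move=> y x z; exact: ltn_trans.
have se : sorted (@ord_lt m) e by apply: sorted_filter => //; exact: enum_ord_sorted.
have ue : uniq e by rewrite filter_uniq ?enum_uniq.
have e_codom : e =i codom f by move=> x; rewrite mem_filter mem_enum andbT.
have size_e : size e = s.
  rewrite (perm_size (uniq_perm ue _ e_codom)) ?size_codom ?card_ord //.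
  by rewrite map_inj_uniq ?enum_uniq.
have fe j : f j \in e by rewrite e_codom codom_f.
have idx_lt j : (index (f j) e < s)%N by rewrite -size_e index_mem.
pose pos (j : 'I_s) : 'I_s := Ordinal (idx_lt j).
have pos_inj : injective pos.
  move=> a b /(congr1 val) /= E; apply: finj.
  by rewrite -(nth_index (f a) (fe a)) E nth_index.
exists [ffun k => nth (f k) e k], (perm pos_inj); split.
- move=> a b ab; rewrite !ffunE (set_nth_default (f b) (f a)) ?size_e //.
  by apply: (sorted_ltn_nth ltT (f b) se); rewrite ?inE ?size_e.
- by move=> i; rewrite ffunE permE /= (set_nth_default (f i)) ?size_e // nth_index.
Qed.

Lemma incr_perm_uniq (g g' : 'I_s -> 'I_m) (t t' : 'S_s) : incr g -> incr g' ->
  (forall i, g (t i) = g' (t' i)) -> g =1 g' /\ t = t'.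
Proof.
move=> Hg Hg' E.
have gg : g =1 g' by apply: incr_eq => // k; exists (t' (t^-1 k)%g); rewrite -E permKV.
split => //; apply/permP => i; apply: (incr_inj Hg); by rewrite E gg.
Qed.

Definition incr_perm_comp (p : {ffun 'I_s -> 'I_m} * {perm 'I_s}) : {ffun 'I_s -> 'I_m} :=
  [ffun i => p.1 (p.2 i)].

Definition incr_perm_split (f : {ffun 'I_s -> 'I_m}) : {ffun 'I_s -> 'I_m} * {perm 'I_s} :=
  odflt (f, 1%g) [pick p | incrb p.1 && (f == incr_perm_comp p)].

Lemma incr_perm_splitP (f : {ffun 'I_s -> 'I_m}) : injectiveb f ->
  incrb (incr_perm_split f).1 && (f == incr_perm_comp (incr_perm_split f)).
Proof.
move/injectiveP => finj; rewrite /incr_perm_split; case: pickP => [p -> //|].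
have [g [t [Hg E]]] := injective_incr_perm finj.
move/(_ (g, t)); rewrite /= (introT (incrbP g) Hg) /=.
suff -> : f = incr_perm_comp (g, t) by rewrite eqxx.
by apply/ffunP => i; rewrite ffunE E.
Qed.

Lemma incr_perm_compK (p : {ffun 'I_s -> 'I_m} * {perm 'I_s}) :
  incrb p.1 -> incr_perm_split (incr_perm_comp p) = p.
Proof.
move=> Hp; rewrite /incr_perm_split; case: pickP => [q /andP [Hq /eqP E]|]; last first.
  by move/(_ p); rewrite Hp eqxx.
have E' i : p.1 (p.2 i) = q.1 (q.2 i).
  by have := congr1 (fun F : {ffun 'I_s -> 'I_m} => F i) E; rewrite !ffunE.
have [gg tt] := incr_perm_uniq (elimT (incrbP _) Hp) (elimT (incrbP _) Hq) E'.
case: p q {Hp Hq E E'} gg tt => [g t] [g' t'] /= gg ->; congr (_, _).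
by apply/ffunP => i; rewrite gg.
Qed.

Lemma incr_perm_comp_inj (p : {ffun 'I_s -> 'I_m} * {perm 'I_s}) :
  incrb p.1 -> injectiveb (incr_perm_comp p).
Proof.
move=> /incrbP Hp; apply/injectiveP => a b; rewrite !ffunE => /(incr_inj Hp).
exact: perm_inj.
Qed.

Lemma sum_injective_incr_perm (V : nmodType) (H : {ffun 'I_s -> 'I_m} -> V) :
  \sum_(f : {ffun 'I_s -> 'I_m} | injectiveb f) H f =
  \sum_(g : {ffun 'I_s -> 'I_m} | incrb g) \sum_(t : {perm 'I_s}) H (incr_perm_comp (g, t)).
Proof.
rewrite pair_big /= (reindex_onto incr_perm_comp incr_perm_split); last first.
  by move=> f /incr_perm_splitP /andP [_ /eqP <-].
apply: eq_big => [p|[g t] _ //]; rewrite andbT; apply/idP/idP => [/andP [Hi /eqP <-]|Hp].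
  by case/andP: (incr_perm_splitP Hi).
by rewrite incr_perm_comp_inj // incr_perm_compK // eqxx.
Qed.

End IncreasingMaps.

Section CauchyBinet.
Variables (R : comRingType) (s m : nat).

(* Expanding every row of P *m Q along the rows of Q (multilinearity). *)
Lemma det_mulmx_expand (P : 'M[R]_(s, m)) (Q : 'M[R]_(m, s)) :
  \det (P *m Q) = \sum_(f : {ffun 'I_s -> 'I_m}) (\prod_i P i (f i)) * \det (rowsub f Q).
Proof.
rewrite /determinant.
transitivity (\sum_(t : {perm 'I_s}) \sum_(f : {ffun 'I_s -> 'I_m})
               (-1) ^+ t * \prod_i (P i (f i) * Q (f i) (t i))).
  apply: eq_bigr => t _; rewrite -big_distrr /=; congr (_ * _).
  rewrite -(bigA_distr_bigA (fun i k => P i k * Q k (t i))) /=.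
  by apply: eq_bigr => i _; rewrite mxE.
rewrite exchange_big; apply: eq_bigr => f _; rewrite big_distrr /=.
apply: eq_bigr => t _; rewrite big_split /= mulrCA; congr (_ * (_ * _)).
by apply: eq_bigr => i _; rewrite mxE.
Qed.

Lemma det_rowsub_perm (Q : 'M[R]_(m, s)) (g : {ffun 'I_s -> 'I_m}) (t : {perm 'I_s}) :
  \det (rowsub (incr_perm_comp (g, t)) Q) = (-1) ^+ t * \det (rowsub g Q).
Proof.
have -> : rowsub (incr_perm_comp (g, t)) Q = row_perm t (rowsub g Q).
  by apply/matrixP => i j; rewrite !mxE ffunE.
by rewrite row_permE det_mulmx det_perm.
Qed.

Theorem cauchy_binet (P : 'M[R]_(s, m)) (Q : 'M[R]_(m, s)) :
  \det (P *m Q) =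
  \sum_(g : {ffun 'I_s -> 'I_m} | incrb g) \det (colsub g P) * \det (rowsub g Q).
Proof.
rewrite det_mulmx_expand (bigID (fun f : {ffun 'I_s -> 'I_m} => injectiveb f)) /=.
rewrite [X in _ + X]big1 ?addr0; last first.
  move=> f /injectivePn [a [b nab fab]].
  by rewrite (@determinant_alternate _ _ (rowsub f Q) a b nab) ?mulr0 // => j; rewrite !mxE fab.
rewrite sum_injective_incr_perm; apply: eq_bigr => g _.
transitivity (\sum_(t : {perm 'I_s})
               ((-1) ^+ t * \prod_i (colsub g P) i (t i)) * \det (rowsub g Q)).
  apply: eq_bigr => t _; rewrite det_rowsub_perm mulrA [_ * (-1) ^+ t]mulrC.
  by congr (_ * _ * _); apply: eq_bigr => i _; rewrite !ffunE mxE.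
by rewrite -big_distrl.
Qed.

End CauchyBinet.

Lemma colsub_mul_diag (R : comRingType) s m p (A : 'M[R]_(s, m)) (a : 'I_m -> R)
    (g : 'I_p -> 'I_m) :
  colsub g (A *m diag_mx (\row_j a j)) = colsub g A *m diag_mx (\row_k a (g k)).
Proof. by apply/matrixP => i j; rewrite !mul_mx_diag !mxE. Qed.

(* Cauchy-Binet applied twice to a product A diag(a) V diag(b) Z, which turns
   its determinant into a polynomial in a and b with squarefree monomials. *)
Lemma det_diag_scaled (R : comRingType) s r n (A : 'M[R]_(s, r)) (a : 'I_r -> R)
    (V : 'M[R]_(r, n)) (b : 'I_n -> R) (Z : 'M[R]_(n, s)) :
  \det (A *m diag_mx (\row_j a j) *m V *m diag_mx (\row_i b i) *m Z) =
  \sum_(J : {ffun 'I_s -> 'I_r} | incrb J) \sum_(I : {ffun 'I_s -> 'I_n} | incrb I)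
     \det (colsub J A) * \det (mxsub J I V) * \det (rowsub I Z) *
     (\prod_k a (J k)) * (\prod_k b (I k)).
Proof.
have -> : A *m diag_mx (\row_j a j) *m V *m diag_mx (\row_i b i) *m Z =
  (A *m diag_mx (\row_j a j)) *m ((V *m diag_mx (\row_i b i)) *m Z) by rewrite !mulmxA.
rewrite cauchy_binet; apply: eq_bigr => J _.
rewrite colsub_mul_diag det_mulmx det_diag.
rewrite -!mul_rowsub_mx cauchy_binet !big_distrr /=.
apply: eq_bigr => I _.
rewrite colsub_mul_diag det_mulmx det_diag.
have -> : colsub I (rowsub J V) = mxsub J I V by apply/matrixP => i j; rewrite !mxE.
have dA : \prod_i (\row_k a (J k)) 0 i = \prod_k a (J k) by apply: eq_bigr => k _; rewrite mxE.
have dB : \prod_i (\row_k b (I k)) 0 i = \prod_k b (I k) by apply: eq_bigr => k _; rewrite mxE.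
rewrite dA dB; set pa := \prod_k a (J k); set pb := \prod_k b (I k).
by rewrite !mulrA (mulrAC _ pb) (mulrAC _ pa) (mulrAC _ pa).
Qed.

(* Real terms are read in R_scope (Stdlib binds it to R), but matrix and bigop
   lemmas produce MathComp operations on R, which unfold to Stdlib's;
   [to_R] restates them for the Stdlib tactics [ring] and [lra]. *)
Lemma R_addE (x y : R) : x + y = Rplus x y. Proof. by []. Qed.
Lemma R_mulE (x y : R) : x * y = Rmult x y. Proof. by []. Qed.
Lemma R_oppE (x : R) : - x = Ropp x. Proof. by []. Qed.
Ltac to_R := rewrite ?R_addE ?R_mulE ?R_oppE;
  repeat match goal with |- context [@fun_of_matrix ?T ?m ?k ?A ?i ?j] =>
    progress change (@fun_of_matrix T m k A i j) with (@fun_of_matrix R m k A i j) end;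
  try match goal with |- @eq _ ?a ?b => change (@eq R a b) end.

Section RealSigns.
Local Open Scope R_scope.

Ltac Rsgn_cases := unfold Rsgn; repeat destruct Rlt_dec; try reflexivity.

Lemma Rsgn_pos a : Rsgn a = 1%Z <-> 0 < a.
Proof. by Rsgn_cases; split. Qed.

Lemma Rsgn_neg a : Rsgn a = (-1)%Z <-> a < 0.
Proof. by Rsgn_cases; split => //; lra. Qed.

Lemma Rsgn_zero a : Rsgn a = 0%Z <-> a = 0.
Proof. by Rsgn_cases; split => //; lra. Qed.

Lemma Rsgn_mul_pos c a : 0 < c -> Rsgn (c * a) = Rsgn a.
Proof. by move=> c_gt0; Rsgn_cases; exfalso; nra. Qed.

Lemma Rsgn_incr_sub (D : R -> Prop) (f : R -> R) a b :
  (forall x y, D x -> D y -> x < y -> f x < f y) -> D a -> D b ->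
  Rsgn (f a - f b) = Rsgn (a - b).
Proof.
move=> f_incr Da Db; have [ab|[<-|ba]] := Rtotal_order a b.
- by have fab := f_incr _ _ Da Db ab; Rsgn_cases; exfalso; lra.
- by Rsgn_cases; exfalso; lra.
- by have fba := f_incr _ _ Db Da ba; Rsgn_cases; exfalso; lra.
Qed.

Lemma Rsgn_exp_sub a b : Rsgn (exp a - exp b) = Rsgn (a - b).
Proof. by apply: (@Rsgn_incr_sub (fun _ => True)) => // x y _ _; exact: exp_increasing. Qed.

Lemma Rsgn_ln_sub x y : 0 < x -> 0 < y -> Rsgn (ln x - ln y) = Rsgn (x - y).
Proof. by apply: (@Rsgn_incr_sub (Rlt 0)) => u v u_gt0 _; exact: ln_increasing. Qed.

(* A positive factor carrying d to u, when u and d have the same sign. *)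
Definition sgn_ratio (u d : R) : R := if d == 0 then 1 else u / d.

Lemma sgn_ratio_pos u d : Rsgn u = Rsgn d -> 0 < sgn_ratio u d.
Proof.
rewrite /sgn_ratio => E; case: eqP => [_|d_neq0]; first lra.
have [d_lt0|[//|d_gt0]] := Rtotal_order d 0.
- have u_lt0 : u < 0 by apply/Rsgn_neg; rewrite E; apply/Rsgn_neg.
  by apply: Rmult_neg_neg => //; exact: Rinv_lt_0_compat.
- have u_gt0 : 0 < u by apply/Rsgn_pos; rewrite E; apply/Rsgn_pos.
  exact: Rdiv_lt_0_compat.
Qed.

Lemma sgn_ratio_mul u d : Rsgn u = Rsgn d -> sgn_ratio u d * d = u.
Proof.
rewrite /sgn_ratio; case: eqP => [-> | d_neq0 _].
  have -> : Rsgn 0 = 0%Z by apply/Rsgn_zero.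
  by move/Rsgn_zero ->; rewrite Rmult_0_r.
by rewrite /Rdiv Rmult_assoc Rinv_l // Rmult_1_r.
Qed.

End RealSigns.

Lemma continuity_ext (f g : R -> R) : f =1 g -> continuity f -> continuity g.
Proof. by move=> /functional_extensionality ->. Qed.

Lemma continuity_big_sum (I : Type) (l : seq I) (P : pred I) (F : I -> R -> R) :
  (forall i, continuity (F i)) -> continuity (fun t => \sum_(i <- l | P i) F i t).
Proof.
move=> F_cont; elim: l => [|i l IH].
  by apply: (@continuity_ext (fun=> 0)) => [t|]; rewrite ?big_nil //; exact: continuity_const.
case Pi: (P i).
  apply: (@continuity_ext (fun t => Rplus (F i t) (\sum_(j <- l | P j) F j t))).
    by move=> t; rewrite big_cons Pi.
  exact: continuity_plus.
by apply: continuity_ext IH => t; rewrite big_cons Pi.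
Qed.

Lemma continuity_big_prod (I : Type) (l : seq I) (P : pred I) (F : I -> R -> R) :
  (forall i, continuity (F i)) -> continuity (fun t => \prod_(i <- l | P i) F i t).
Proof.
move=> F_cont; elim: l => [|i l IH].
  by apply: (@continuity_ext (fun=> 1)) => [t|]; rewrite ?big_nil //; exact: continuity_const.
case Pi: (P i).
  apply: (@continuity_ext (fun t => Rmult (F i t) (\prod_(j <- l | P j) F j t))).
    by move=> t; rewrite big_cons Pi.
  exact: continuity_mult.
by apply: continuity_ext IH => t; rewrite big_cons Pi.
Qed.

Section SquarefreePolynomials.
Variables s n r : nat.

Notation coefs := ({ffun 'I_s -> 'I_n} -> {ffun 'I_s -> 'I_r} -> R).

Definition pos_vec m (a : 'I_m -> R) : Prop := forall j, Rlt 0 (a j).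

Definition sqfree_poly (c : coefs) (a : 'I_r -> R) (b : 'I_n -> R) : R :=
  \sum_(J : {ffun 'I_s -> 'I_r} | incrb J) \sum_(I : {ffun 'I_s -> 'I_n} | incrb I)
     c I J * (\prod_k a (J k)) * (\prod_k b (I k)).

Definition same_sign (c : coefs) : Prop :=
  forall I J I' J', incrb I -> incrb J -> incrb I' -> incrb J' ->
    c I J <> 0 -> c I' J' <> 0 -> (Rlt 0 (c I J) <-> Rlt 0 (c I' J')).

Definition some_nonzero (c : coefs) : Prop :=
  exists I J, incrb I /\ incrb J /\ c I J <> 0.

Definition nonvanishing (c : coefs) : Prop :=
  forall a b, pos_vec a -> pos_vec b -> sqfree_poly c a b <> 0.

Lemma sqfree_poly_continuous c (a : 'I_r -> R -> R) (b : 'I_n -> R -> R) :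
  (forall j, continuity (a j)) -> (forall i, continuity (b i)) ->
  continuity (fun t => sqfree_poly c (a^~ t) (b^~ t)).
Proof.
move=> a_cont b_cont; apply: continuity_big_sum => J; apply: continuity_big_sum => I.
apply: continuity_mult; last exact: continuity_big_prod.
apply: continuity_mult; last exact: continuity_big_prod.
exact: continuity_const.
Qed.

Lemma prod_pos m (a : 'I_m -> R) (J : 'I_s -> 'I_m) : pos_vec a -> Rlt 0 (\prod_k a (J k)).
Proof.
move=> a_pos; apply: (big_ind (Rlt 0)) => //; first exact: Rlt_0_1.
by move=> x y; exact: Rmult_lt_0_compat.
Qed.

Lemma sum_ge0 (I : finType) (P : pred I) (F : I -> R) :
  (forall i, P i -> Rle 0 (F i)) -> Rle 0 (\sum_(i | P i) F i).
Proof.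
move=> F_ge0; apply: (big_ind (Rle 0)) => //; first exact: Rle_refl.
by move=> x y; exact: Rplus_le_le_0_compat.
Qed.

Lemma sqfree_poly_pos c a b I0 J0 :
  (forall I J, incrb I -> incrb J -> Rle 0 (c I J)) ->
  incrb I0 -> incrb J0 -> Rlt 0 (c I0 J0) -> pos_vec a -> pos_vec b ->
  Rlt 0 (sqfree_poly c a b).
Proof.
move=> c_ge0 hI0 hJ0 c0_gt0 a_pos b_pos.
have term_ge0 I J : incrb I -> incrb J ->
    Rle 0 (c I J * (\prod_k a (J k)) * (\prod_k b (I k))).
  move=> hI hJ; apply: Rmult_le_pos; last exact: Rlt_le (prod_pos I b_pos).
  by apply: Rmult_le_pos; [exact: c_ge0 | exact: Rlt_le (prod_pos J a_pos)].
rewrite /sqfree_poly (bigD1 J0) //= (bigD1 I0) //=.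
have t0 : Rlt 0 (c I0 J0 * (\prod_k a (J0 k)) * (\prod_k b (I0 k))).
  by apply: Rmult_lt_0_compat; [apply: Rmult_lt_0_compat => //|]; exact: prod_pos.
have rest_I : Rle 0 (\sum_(I | incrb I && (I != I0))
                       c I J0 * (\prod_k a (J0 k)) * (\prod_k b (I k))).
  by apply: sum_ge0 => I /andP [hI _]; exact: term_ge0.
have rest_J : Rle 0 (\sum_(J | incrb J && (J != J0)) \sum_(I | incrb I)
                       c I J * (\prod_k a (J k)) * (\prod_k b (I k))).
  by apply: sum_ge0 => J /andP [hJ _]; apply: sum_ge0 => I hI; exact: term_ge0.
by do 2 apply: Rplus_lt_le_0_compat => //.
Qed.

Lemma sqfree_poly_opp c a b : sqfree_poly (fun I J => - c I J) a b = - sqfree_poly c a b.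
Proof.
rewrite /sqfree_poly -sumrN; apply: eq_bigr => J _; rewrite -sumrN.
by apply: eq_bigr => I _; rewrite !mulNr.
Qed.

Definition indicator m (J : {ffun 'I_s -> 'I_m}) (j : 'I_m) : R := (j \in codom J)%:R.

Lemma prod_indicator m (J J1 : {ffun 'I_s -> 'I_m}) : incrb J -> incrb J1 ->
  \prod_k indicator J1 (J k) = (J == J1)%:R.
Proof.
move=> /incrbP hJ /incrbP hJ1; case: eqP => [->|neq].
  by apply: big1 => k _; rewrite /indicator codom_f.
have [k hk] : exists k, J k \notin codom J1.
  apply: NNPP => H; apply: neq; apply/ffunP; apply: (incr_eq hJ hJ1) => k.
  have /codomP [k' ->] : J k \in codom J1 by apply/negPn/negP => h; apply: H; exists k.
  by exists k'.
by rewrite (bigD1 k) //= /indicator (negbTE hk) mul0r.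
Qed.

Lemma sqfree_poly_indicator c I1 J1 : incrb I1 -> incrb J1 ->
  sqfree_poly c (indicator J1) (indicator I1) = c I1 J1.
Proof.
move=> hI1 hJ1; rewrite /sqfree_poly (bigD1 J1) //= [X in _ + X]big1 ?addr0; last first.
  move=> J /andP [hJ nJ]; apply: big1 => I hI.
  by rewrite prod_indicator // (negbTE nJ) mulr0 mul0r.
rewrite (bigD1 I1) //= [X in _ + X]big1 ?addr0; last first.
  by move=> I /andP [hI nI]; rewrite [X in _ * X]prod_indicator // (negbTE nI) mulr0.
by rewrite !prod_indicator // !eqxx !mulr1.
Qed.

(* The segment from u to v, pushed into the positive orthant in its interior. *)
Definition bent_segment m (u v : 'I_m -> R) (t : R) (j : 'I_m) : R :=
  (1 - t) * u j + t * v j + t * (1 - t).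

Lemma bent_segment0 m (u v : 'I_m -> R) : bent_segment u v 0 =1 u.
Proof. by move=> j; rewrite /bent_segment; ring. Qed.

Lemma bent_segment1 m (u v : 'I_m -> R) : bent_segment u v 1 =1 v.
Proof. by move=> j; rewrite /bent_segment; ring. Qed.

Lemma bent_segment_continuous m (u v : 'I_m -> R) j :
  continuity (fun t => bent_segment u v t j).
Proof.
have cid : continuity (fun t : R => t) by exact: derivable_continuous derivable_id.
have c1 : continuity (fun t : R => 1 - t).
  by apply: continuity_minus => //; exact: continuity_const.
apply: continuity_plus; first apply: continuity_plus.
- by apply: continuity_mult => //; exact: continuity_const.
- by apply: continuity_mult => //; exact: continuity_const.
- exact: continuity_mult.
Qed.

Lemma bent_segment_pos m (u v : 'I_m -> R) t :
  (forall j, Rle 0 (u j)) -> (forall j, Rle 0 (v j)) -> Rlt 0 t -> Rlt t 1 ->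
  pos_vec (bent_segment u v t).
Proof.
move=> u_ge0 v_ge0 t_gt0 t_lt1 j; have := u_ge0 j; have := v_ge0 j.
by rewrite /bent_segment; nra.
Qed.

Lemma indicator_ge0 m (J : {ffun 'I_s -> 'I_m}) j : Rle 0 (indicator J j).
Proof. by rewrite /indicator; case: (_ \in _); [exact: Rle_0_1 | exact: Rle_refl]. Qed.

(* Coefficients of opposite signs force a root in the positive orthant:
   apply the intermediate value theorem along the bent segment joining the
   two indicator points. *)
Lemma sqfree_poly_root c I1 J1 I2 J2 :
  incrb I1 -> incrb J1 -> incrb I2 -> incrb J2 ->
  Rlt 0 (c I1 J1) -> Rlt (c I2 J2) 0 ->
  exists a b, pos_vec a /\ pos_vec b /\ sqfree_poly c a b = 0.
Proof.
move=> hI1 hJ1 hI2 hJ2 c1_gt0 c2_lt0.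
pose a j t := bent_segment (indicator J2) (indicator J1) t j.
pose b i t := bent_segment (indicator I2) (indicator I1) t i.
pose f t := sqfree_poly c (a^~ t) (b^~ t).
have f0 : f 0 = c I2 J2.
  rewrite -(sqfree_poly_indicator c hI2 hJ2); congr sqfree_poly;
  by apply: functional_extensionality => j; exact: bent_segment0.
have f1 : f 1 = c I1 J1.
  rewrite -(sqfree_poly_indicator c hI1 hJ1); congr sqfree_poly;
  by apply: functional_extensionality => j; exact: bent_segment1.
have f_cont : continuity f by apply: sqfree_poly_continuous => *; exact: bent_segment_continuous.
have f0_lt0 : Rlt (f 0) 0 by rewrite f0.
have f1_gt0 : Rlt 0 (f 1) by rewrite f1.
have [z [[z_ge0 z_le1] fz]] := IVT f 0 1 f_cont Rlt_0_1 f0_lt0 f1_gt0.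
have z_gt0 : Rlt 0 z by case: (Rle_lt_or_eq_dec _ _ z_ge0) => // z0; move: fz; rewrite -z0 f0; lra.
have z_lt1 : Rlt z 1 by case: (Rle_lt_or_eq_dec _ _ z_le1) => // z1; move: fz; rewrite z1 f1; lra.
exists (a^~ z), (b^~ z); split; [|split] => //; apply: bent_segment_pos => //; exact: indicator_ge0.
Qed.

Lemma same_sign_bound c I0 J0 I J : same_sign c ->
  incrb I0 -> incrb J0 -> incrb I -> incrb J -> c I0 J0 <> 0 ->
  (Rlt 0 (c I0 J0) -> Rle 0 (c I J)) /\ (Rlt (c I0 J0) 0 -> Rle (c I J) 0).
Proof.
move=> ss hI0 hJ0 hI hJ nz0; case: (Req_dec (c I J) 0) => [->|nz]; first by split=> _; lra.
have := ss _ _ _ _ hI hJ hI0 hJ0 nz nz0.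
by split=> sgn0; lra.
Qed.

Theorem nonvanishingP c : nonvanishing c <-> same_sign c /\ some_nonzero c.
Proof.
split => [nv|[ss [I0 [J0 [hI0 [hJ0 nz0]]]]] a b pa pb].
  split.
    move=> I J I' J' hI hJ hI' hJ' nz nz'.
    have no_mixed I1 J1 I2 J2 : incrb I1 -> incrb J1 -> incrb I2 -> incrb J2 ->
        Rlt 0 (c I1 J1) -> ~ Rlt (c I2 J2) 0.
      move=> h1 h2 h3 h4 pos neg.
      by have [a [b [pa [pb]]]] := sqfree_poly_root h1 h2 h3 h4 pos neg; exact: nv.
    have := no_mixed _ _ _ _ hI hJ hI' hJ'; have := no_mixed _ _ _ _ hI' hJ' hI hJ.
    by have := Rtotal_order (c I J) 0; have := Rtotal_order (c I' J') 0; intuition lra.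
  apply: NNPP => none.
  have one_pos m : pos_vec (fun _ : 'I_m => 1) by move=> j; exact: Rlt_0_1.
  apply: (nv _ _ (one_pos r) (one_pos n)); apply: big1 => J hJ; apply: big1 => I hI.
  case: (Req_dec (c I J) 0) => [->|nz]; first by rewrite !mul0r.
  by case: none; exists I, J.
have bound I J (hI : incrb I) (hJ : incrb J) := same_sign_bound ss hI0 hJ0 hI hJ nz0.
have [neg0|[//|pos0]] := Rtotal_order (c I0 J0) 0; last first.
  have c_ge0 I J (hI : incrb I) (hJ : incrb J) : Rle 0 (c I J) := proj1 (bound I J hI hJ) pos0.
  by apply: Rgt_not_eq; exact: sqfree_poly_pos c_ge0 hI0 hJ0 pos0 pa pb.
have opp_ge0 I J (hI : incrb I) (hJ : incrb J) : Rle 0 (- c I J).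
  by have := proj2 (bound I J hI hJ) neg0; move=> ?; lra.
have opp0 : Rlt 0 (- c I0 J0) by lra.
have := sqfree_poly_pos (c := fun I J => - c I J) opp_ge0 hI0 hJ0 opp0 pa pb.
rewrite sqfree_poly_opp => opp_pos; apply: (@Rlt_not_eq _ (IZR 0)).
by have neg : Rlt 0 (Ropp (sqfree_poly c a b)) := opp_pos; lra.
Qed.

End SquarefreePolynomials.

Section MonomialMap.
Variables n r : nat.
Implicit Types (N : 'M[R]_(n, r)) (V : 'M[R]_(r, n)) (kappa : 'cV[R]_r) (x y : 'cV[R]_n).

Definition log_vec x : 'cV[R]_n := \col_i ln (x i 0).

Lemma monomE V x j : monom V x j 0 = exp ((V *m log_vec x) j 0).
Proof.
rewrite !mxE (big_morph exp (id1 := 1) (op1 := *%R) (id2 := 0) (op2 := +%R) exp_plus exp_0).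
by apply: eq_bigr => i _; rewrite mxE.
Qed.

Lemma monom_pos V x j : Rlt 0 (monom V x j 0).
Proof. by rewrite monomE; exact: exp_pos. Qed.

Lemma Rsgn_monom_sub V x y j :
  Rsgn (monom V x j 0 - monom V y j 0) = Rsgn ((V *m (log_vec x - log_vec y)) j 0).
Proof. by rewrite !monomE Rsgn_exp_sub mulmxBr !mxE. Qed.

Lemma Rsgn_log_vec_sub x y i : positive x -> positive y ->
  Rsgn ((log_vec x - log_vec y)%R i 0) = Rsgn ((x - y)%R i 0).
Proof. by move=> x_pos y_pos; rewrite !mxE Rsgn_ln_sub. Qed.

Lemma fk_sub N V kappa x y :
  fk N V kappa x - fk N V kappa y =
  N *m \col_j (kappa j 0 * (monom V x j 0 - monom V y j 0)).
Proof.
rewrite /fk /Nkappa -mulmxBr -mulmxA; congr (_ *m _).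
by apply/matrixP => i j; rewrite (ord1 j) mul_diag_mx !mxE.
Qed.

End MonomialMap.

Section SignObstruction.
Variables n r : nat.
Implicit Types (N : 'M[R]_(n, r)) (V : 'M[R]_(r, n)).

Definition same_signs k (u v : 'cV[R]_k) : Prop := forall i, Rsgn (u i 0) = Rsgn (v i 0).

Lemma sigma_eqP k (u v : 'cV[R]_k) : sigma u = sigma v <-> same_signs u v.
Proof.
split => [E i | E]; last by apply/ffunP => i; rewrite !ffunE.
by have := congr1 (fun f : {ffun 'I_k -> int} => f i) E; rewrite !ffunE.
Qed.

Definition sign_obstruction N V (u : 'cV[R]_r) (z w : 'cV[R]_n) : Prop :=
  [/\ N *m u = 0, imN N z, z <> 0, same_signs z w & same_signs u (V *m w)].

Lemma cond_sigP N V : cond_sig N V <-> ~ exists u z w, sign_obstruction N V u z w.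
Proof.
split => [sig [u [z [w [Nu zS z_neq0 zw uVw]]]] | none s].
  apply: (sig (sigma u)); split; first by exists u.
  exists (V *m w); split; last by apply/sigma_eqP => i; rewrite uVw.
  by exists w; split => //; exists z; split => //; apply/sigma_eqP.
move=> [[u [Nu <-]] [_ [[w [[z [[zS z_neq0] /sigma_eqP zw]] ->]] /sigma_eqP uVw]]].
by apply: none; exists u, z, w; split => // i; rewrite uVw.
Qed.

End SignObstruction.

Lemma imN_sub n r (N : 'M[R]_(n, r)) v w : imN N v -> imN N w -> imN N (v - w).
Proof. by move=> [a ->] [b ->]; exists (a - b); rewrite mulmxBr. Qed.

Section Injectivity.
Variables (n r : nat) (N : 'M[R]_(n, r)) (V : 'M[R]_(r, n)).

Lemma collision_obstruction kappa x y :
  positive kappa -> positive x -> positive y -> imN N (x - y) -> x <> y ->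
  fk N V kappa x = fk N V kappa y ->
  sign_obstruction N V (\col_j (kappa j 0 * (monom V x j 0 - monom V y j 0)))
                   (x - y) (log_vec x - log_vec y).
Proof.
move=> k_pos x_pos y_pos xyS x_neq_y fxy; split => //.
- by rewrite -fk_sub fxy subrr.
- by move/eqP; rewrite subr_eq0 => /eqP.
- by move=> i; rewrite Rsgn_log_vec_sub.
- by move=> j; rewrite mxE Rsgn_mul_pos // Rsgn_monom_sub.
Qed.

(* Conversely an obstruction (u, z, w) is realized by a collision
   f_kappa(X) = f_kappa(Y) with X - Y = z: choose Y > 0 with
   X = Y + z = Y exp(w), then kappa rescales X^V - Y^V to u. *)
Lemma obstruction_collision u z w : sign_obstruction N V u z w ->
  exists kappa X Y, [/\ positive kappa, positive X, positive Y, X - Y = z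
                       & fk N V kappa X = fk N V kappa Y].
Proof.
case=> Nu _ _ zw uVw.
pose Y : 'cV[R]_n := \col_i sgn_ratio (z i 0) (exp (w i 0) - 1).
have zw1 i : Rsgn (z i 0) = Rsgn (exp (w i 0) - 1).
  by rewrite zw -exp_0 Rsgn_exp_sub Rminus_0_r.
have Y_pos : positive Y by move=> i; rewrite mxE; exact: sgn_ratio_pos.
pose X := Y + z.
have XYz : X - Y = z by rewrite /X addrC addKr.
have XY i : X i 0 = Y i 0 * exp (w i 0).
  have := sgn_ratio_mul (zw1 i); rewrite /X !mxE; set q := sgn_ratio _ _ => <-.
  by to_R; ring.
clearbody X Y.
have X_pos : positive X.
  by move=> i; rewrite XY; apply: Rmult_lt_0_compat; [exact: Y_pos | exact: exp_pos].
have logXY : log_vec X - log_vec Y = w.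
  apply/matrixP => i j; rewrite (ord1 j) !mxE XY ln_mult ?ln_exp; last exact: exp_pos.
    by to_R; ring.
  exact: Y_pos.
pose D j := monom V X j 0 - monom V Y j 0.
have uD j : Rsgn (u j 0) = Rsgn (D j) by rewrite /D Rsgn_monom_sub logXY uVw.
pose kappa : 'cV[R]_r := \col_j sgn_ratio (u j 0) (D j).
have k_pos : positive kappa by move=> j; rewrite mxE; exact: sgn_ratio_pos.
exists kappa, X, Y; split => //.
apply/eqP; rewrite -subr_eq0 fk_sub -[X in _ == X]Nu; apply/eqP; congr (_ *m _).
by apply/matrixP => j c; rewrite (ord1 c) mxE [kappa _ _]mxE; exact: sgn_ratio_mul.
Qed.

(* (inj) <-> (sig), with x' := Y for the collision produced above. *)
Lemma inj_sig : cond_inj N V <-> cond_sig N V.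
Proof.
rewrite cond_sigP; split => [inj [u [z [w obs]]] | none].
  have [kappa [X [Y [k_pos X_pos Y_pos XYz fXY]]]] := obstruction_collision obs.
  case: obs => _ zS z_neq0 _ _; apply: z_neq0; rewrite -XYz.
  have YY : imN N (Y - Y) by rewrite subrr; exists 0; rewrite mulmx0.
  rewrite (inj kappa k_pos Y Y_pos X Y _ X_pos YY Y_pos fXY) ?subrr //.
  by rewrite XYz.
move=> kappa k_pos x' x'_pos x y xS x_pos yS y_pos fxy.
apply: NNPP => x_neq_y; apply: none.
have xyS : imN N (x - y).
  have -> : x - y = (x - x') - (y - x') by rewrite opprB addrA subrK.
  exact: imN_sub.
by do 3 eexists; exact: collision_obstruction xyS x_neq_y fxy.
Qed.

End Injectivity.

Lemma derivable_pt_lim_big_sum (I : Type) (l : seq I) (F : I -> R -> R) (d : I -> R) x :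
  (forall i, derivable_pt_lim (F i) x (d i)) ->
  derivable_pt_lim (fun t => \sum_(i <- l) F i t) x (\sum_(i <- l) d i).
Proof.
move=> F_der; elim: l => [|i l IH].
  rewrite big_nil; apply: (derivable_pt_lim_ext (fct_cte 0)); last exact: derivable_pt_lim_const.
  by move=> t; rewrite big_nil.
rewrite big_cons; apply: (derivable_pt_lim_ext (plus_fct (F i) (fun t => \sum_(j <- l) F j t))).
  by move=> t; rewrite big_cons.
exact: derivable_pt_lim_plus.
Qed.

Section Jacobian.
Variables (n r : nat) (N : 'M[R]_(n, r)) (V : 'M[R]_(r, n)).
Implicit Types (kappa : 'cV[R]_r) (x : 'cV[R]_n).

Definition jacobian kappa x : 'M[R]_n :=
  N *m diag_mx (\row_j (kappa j 0 * monom V x j 0)) *m V *m diag_mx (\row_i Rinv (x i 0)).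

Lemma jacobianE kappa x i j :
  jacobian kappa x i j =
  (\sum_l N i l * (kappa l 0 * monom V x l 0) * V l j) * Rinv (x j 0).
Proof.
rewrite /jacobian -!mulmxA mul_mx_diag mul_diag_mx mxE big_distrl.
by apply: eq_bigr => l _; rewrite !mxE /= !mulrA.
Qed.

Lemma fk_coordinate_line kappa x (i j : 'I_n) (t : R) :
  fk N V kappa (x + (t - x j 0) *: delta_mx j 0) i 0 =
  \sum_l (N i l * kappa l 0) * exp (\sum_m V l m * ln (if m == j then t else x m 0)).
Proof.
rewrite /fk /Nkappa mxE; apply: eq_bigr => l _.
rewrite monomE mul_mx_diag !mxE; congr (_ * exp _); apply: eq_bigr => m _.
rewrite !mxE eqxx andbT; case: eqP => [->|_]; congr (_ * ln _) => /=.
- by rewrite mulr1n mulr1 addrC subrK.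
- by rewrite mulr0n mulr0 addr0.
Qed.

Lemma jacobianP kappa x : positive x -> is_jacobian (fk N V kappa) x (jacobian kappa x).
Proof.
move=> x_pos i j.
apply: (derivable_pt_lim_ext (fun t => \sum_l (N i l * kappa l 0) *
   exp (\sum_m V l m * ln (if m == j then t else x m 0)))).
  by move=> t; rewrite fk_coordinate_line.
set G := fun l t => \sum_m V l m * ln (if m == j then t else x m 0).
have dG l : derivable_pt_lim (G l) (x j 0)
              (\sum_m V l m * (if m == j then Rinv (x j 0) else 0)).
  apply: derivable_pt_lim_big_sum => m; apply: derivable_pt_lim_scal.
  by case: eqP => _; [exact: derivable_pt_lim_ln | exact: derivable_pt_lim_const].
have -> : jacobian kappa x i j = \sum_l (N i l * kappa l 0) *
           (exp (G l (x j 0)) * \sum_m V l m * (if m == j then Rinv (x j 0) else 0)).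
  rewrite jacobianE big_distrl; apply: eq_bigr => l _.
  rewrite (bigD1 j) //= eqxx big1 ?addr0; last by move=> m /negbTE ->; exact: mulr0.
  have -> : G l (x j 0) = (V *m log_vec x) l 0.
    by rewrite /G mxE; apply: eq_bigr => m _; rewrite mxE; case: eqP => [->|].
  by rewrite -monomE; to_R; ring.
apply: derivable_pt_lim_big_sum => l; apply: derivable_pt_lim_scal.
exact: (derivable_pt_lim_comp _ exp _ _ _ (dG l) (derivable_pt_lim_exp _)).
Qed.

(* Jacobians are unique, so (jac) may be checked on [jacobian]. *)
Lemma is_jacobian_uniq (F : 'cV[R]_n -> 'cV[R]_n) x J J' :
  is_jacobian F x J -> is_jacobian F x J' -> J = J'.
Proof. by move=> H H'; apply/matrixP => i j; exact: uniqueness_limite (H i j) (H' i j). Qed.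

Lemma diag_mx_mulcol m (d : 'I_m -> R) (c : 'cV[R]_m) :
  diag_mx (\row_i d i) *m c = \col_i (d i * c i 0).
Proof. by apply/matrixP => i j; rewrite mul_diag_mx !mxE (ord1 j). Qed.

Lemma jacobian_mulmx kappa x (z : 'cV[R]_n) :
  jacobian kappa x *m z =
  N *m \col_j (kappa j 0 * monom V x j 0 * (V *m \col_i (Rinv (x i 0) * z i 0)) j 0).
Proof. by rewrite /jacobian -!mulmxA !diag_mx_mulcol. Qed.

End Jacobian.

Section JacobianInjectivity.
Variables (n r : nat) (N : 'M[R]_(n, r)) (V : 'M[R]_(r, n)).

Lemma jacobian_kernel_obstruction kappa x z :
  positive kappa -> positive x -> imN N z -> z <> 0 -> jacobian N V kappa x *m z = 0 ->
  let w := \col_i (Rinv (x i 0) * z i 0) in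
  sign_obstruction N V (\col_j (kappa j 0 * monom V x j 0 * (V *m w) j 0)) z w.
Proof.
move=> k_pos x_pos zS z_neq0 Jz w; split => //; first by rewrite -jacobian_mulmx.
- by move=> i; rewrite mxE Rsgn_mul_pos //; exact: Rinv_0_lt_compat.
- move=> j; rewrite mxE Rsgn_mul_pos //.
  by apply: Rmult_lt_0_compat; [exact: k_pos | exact: monom_pos].
Qed.

(* Conversely an obstruction is realized as a kernel vector z of some Jacobian:
   take x = z / w and kappa rescaling x^V (V w) to u. *)
Lemma obstruction_jacobian_kernel u z w : sign_obstruction N V u z w ->
  exists kappa x, [/\ positive kappa, positive x & jacobian N V kappa x *m z = 0].
Proof.
case=> Nu _ _ zw uVw.
pose x : 'cV[R]_n := \col_i sgn_ratio (z i 0) (w i 0).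
have x_pos : positive x by move=> i; rewrite mxE; exact: sgn_ratio_pos.
have xw i : x i 0 * w i 0 = z i 0 by rewrite mxE; exact: sgn_ratio_mul.
clearbody x.
have w_eq : \col_i (Rinv (x i 0) * z i 0) = w.
  apply/matrixP => i c; rewrite (ord1 c) mxE -xw; to_R.
  by rewrite -Rmult_assoc Rinv_l ?Rmult_1_l //; have := x_pos i; lra.
have uD j : Rsgn (u j 0) = Rsgn (monom V x j 0 * (V *m w) j 0).
  by rewrite Rsgn_mul_pos ?uVw //; exact: monom_pos.
pose kappa : 'cV[R]_r := \col_j sgn_ratio (u j 0) (monom V x j 0 * (V *m w) j 0).
have k_pos : positive kappa by move=> j; rewrite mxE; exact: sgn_ratio_pos.
exists kappa, x; split => //; rewrite jacobian_mulmx w_eq -Nu; congr (_ *m _).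
apply/matrixP => j c; rewrite (ord1 c) mxE [kappa _ _]mxE -mulrA.
exact: sgn_ratio_mul.
Qed.

Lemma jac_sig : cond_jac N V <-> cond_sig N V.
Proof.
rewrite cond_sigP; split => [jac [u [z [w obs]]] | none].
  have [kappa [x [k_pos x_pos Jz]]] := obstruction_jacobian_kernel obs.
  case: obs => _ zS z_neq0 _ _; apply: z_neq0.
  apply: (jac kappa k_pos x x_pos _ (jacobianP N V kappa x_pos)) => //.
    by exists 0; rewrite mulmx0.
  by rewrite Jz mulmx0.
move=> kappa k_pos x x_pos J HJ v w vS wS Jvw.
rewrite (is_jacobian_uniq HJ (jacobianP N V kappa x_pos)) in Jvw.
apply: NNPP => v_neq_w; apply: none; do 3 eexists.
apply: (jacobian_kernel_obstruction k_pos x_pos (imN_sub vS wS)).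
  by move/eqP; rewrite subr_eq0; exact/negP/eqP.
by rewrite mulmxBr Jvw subrr.
Qed.

End JacobianInjectivity.

Definition minor_coefs n r s (N : 'M[R]_(n, r)) (V : 'M[R]_(r, n))
  (I : {ffun 'I_s -> 'I_n}) (J : {ffun 'I_s -> 'I_r}) : R := minor_prod N V I J.

Lemma weights_realized n r (V : 'M[R]_(r, n)) (a : 'I_r -> R) (b : 'I_n -> R) :
  pos_vec a -> pos_vec b ->
  exists kappa x, [/\ positive kappa, positive x,
    (fun j => kappa j 0 * monom V x j 0) = a & (fun i => Rinv (x i 0)) = b].
Proof.
move=> a_pos b_pos.
pose x : 'cV[R]_n := \col_i Rinv (b i).
have x_pos : positive x by move=> i; rewrite mxE; exact: Rinv_0_lt_compat.
pose kappa : 'cV[R]_r := \col_j (a j * Rinv (monom V x j 0)).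
have k_pos : positive kappa.
  move=> j; rewrite mxE; apply: Rmult_lt_0_compat => //.
  exact: Rinv_0_lt_compat (monom_pos V x j).
exists kappa, x; split => //; apply: functional_extensionality => j.
  rewrite [kappa _ _]mxE; to_R; rewrite Rmult_assoc Rinv_l ?Rmult_1_r //.
  by have := monom_pos V x j; lra.
by rewrite mxE Rinv_inv.
Qed.

Section RankFactorization.
Variables (n r s : nat) (N : 'M[R]_(n, r)) (V : 'M[R]_(r, n)).
Variables (Z : 'M[R]_(n, s)) (A : 'M[R]_(s, r)) (L : 'M[R]_(s, n)) (B : 'M[R]_(r, s)).
Hypotheses (NZA : N = Z *m A) (LZ : L *m Z = 1%:M) (AB : A *m B = 1%:M).

(* The s x s matrix representing the Jacobian on S = im Z. *)
Definition reduced_jacobian (a : 'I_r -> R) (b : 'I_n -> R) : 'M[R]_s :=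
  A *m diag_mx (\row_j a j) *m V *m diag_mx (\row_i b i) *m Z.

Lemma jacobian_factor kappa x :
  jacobian N V kappa x *m Z =
  Z *m reduced_jacobian (fun j => kappa j 0 * monom V x j 0) (fun i => Rinv (x i 0)).
Proof. by rewrite /jacobian /reduced_jacobian NZA !mulmxA. Qed.

Lemma det_reduced_jacobian a b :
  \det (reduced_jacobian a b) = sqfree_poly (@minor_coefs n r s N V) a b.
Proof.
rewrite det_diag_scaled; apply: eq_bigr => J _; apply: eq_bigr => I _.
rewrite /minor_coefs /minor_prod NZA mxsub_mul det_mulmx.
by congr (_ * _ * _); rewrite mulrC mulrA.
Qed.

Lemma Z_inj (c : 'cV[R]_s) : Z *m c = 0 -> c = 0.
Proof. by move=> Zc; rewrite -[c]mul1mx -LZ -mulmxA Zc mulmx0. Qed.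

Lemma imN_Z (c : 'cV[R]_s) : imN N (Z *m c).
Proof. by exists (B *m c); rewrite NZA -mulmxA (mulmxA A) AB mul1mx. Qed.

Lemma imN_factor v : imN N v -> exists c, v = Z *m c.
Proof. by move=> [w ->]; exists (A *m w); rewrite NZA mulmxA. Qed.

Lemma jacobian_inj_det kappa x :
  (forall v w, imN N v -> imN N w -> jacobian N V kappa x *m v = jacobian N V kappa x *m w -> v = w)
  <-> \det (reduced_jacobian (fun j => kappa j 0 * monom V x j 0) (fun i => Rinv (x i 0))) != 0.
Proof.
set M := reduced_jacobian _ _; split => [inj | detM v w vS wS Jvw].
  apply/negP; rewrite -det_tr => /det0P [c c_neq0 cM].
  have Mc : M *m c^T = 0 by rewrite -[M]trmxK -trmx_mul cM trmx0.
  have : Z *m c^T = Z *m 0.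
    apply: inj; try exact: imN_Z.
    by rewrite !mulmx0 mulmxA jacobian_factor -mulmxA Mc mulmx0.
  by rewrite mulmx0 => /Z_inj/(congr1 trmx); rewrite trmxK trmx0 => c0; rewrite c0 eqxx in c_neq0.
have [c vw] := imN_factor (imN_sub vS wS).
have Mc : M *m c = 0.
  by apply: Z_inj; rewrite mulmxA -jacobian_factor -mulmxA -vw mulmxBr Jvw subrr.
have M_unit : M \in unitmx by rewrite unitmxE unitfE.
apply/eqP; rewrite -subr_eq0 vw.
by rewrite -[c](mulKmx M_unit) Mc !mulmx0.
Qed.

Lemma jac_nonvanishing : cond_jac N V <-> nonvanishing (@minor_coefs n r s N V).
Proof.
split => [jac a b a_pos b_pos | nv kappa k_pos x x_pos J HJ].
  have [kappa [x [k_pos x_pos <- <-]]] := weights_realized V a_pos b_pos.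
  rewrite -det_reduced_jacobian; apply/eqP/(jacobian_inj_det kappa x).
  exact: jac kappa k_pos x x_pos _ (jacobianP N V kappa x_pos).
rewrite (is_jacobian_uniq HJ (jacobianP N V kappa x_pos)); apply/jacobian_inj_det.
rewrite det_reduced_jacobian; apply/eqP; apply: nv => [j|i].
  by apply: Rmult_lt_0_compat; [exact: k_pos | exact: monom_pos].
exact: Rinv_0_lt_compat.
Qed.

End RankFactorization.

Lemma incr_finfun s m (f : 'I_s -> 'I_m) : incr f -> incrb (finfun f).
Proof. by move=> f_incr; apply/incrbP => a b ab; rewrite !ffunE; exact: f_incr. Qed.

Lemma minor_coefs_finfun n r s (N : 'M[R]_(n, r)) (V : 'M[R]_(r, n))
    (I : 'I_s -> 'I_n) (J : 'I_s -> 'I_r) :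
  minor_coefs N V (finfun I) (finfun J) = minor_prod N V I J.
Proof.
by rewrite /minor_coefs; congr minor_prod; apply: functional_extensionality => k; rewrite ffunE.
Qed.

Lemma min_same_sign n r (N : 'M[R]_(n, r)) (V : 'M[R]_(r, n)) :
  cond_min N V <->
  same_sign (@minor_coefs n r (\rank N) N V) /\ some_nonzero (@minor_coefs n r (\rank N) N V).
Proof.
split => [[same [I [J [hI [hJ nz]]]]] | [same [I [J [hI [hJ nz]]]]]]; split.
- move=> I1 J1 I2 J2 /incrbP h1 /incrbP h2 /incrbP h3 /incrbP h4.
  exact: same I1 I2 J1 J2 h1 h2 h3 h4.
- by exists (finfun I), (finfun J); rewrite minor_coefs_finfun !incr_finfun.
- move=> I1 I2 J1 J2 h1 h2 h3 h4; rewrite -!minor_coefs_finfun.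
  by apply: same; exact: incr_finfun.
- by exists I, J; split; [exact/incrbP | split; [exact/incrbP|]].
Qed.

Theorem mainTheorem16 (n r : nat) (N : 'M[R]_(n, r)) (V : 'M[R]_(r, n)) :
  (cond_inj N V <-> cond_jac N V) /\
  (cond_inj N V <-> cond_min N V) /\
  (cond_inj N V <-> cond_sig N V).
Proof.
have [L LZ] := row_fullP (col_base_full N).
have [B AB] := row_freeP (row_base_free N).
have NZA : N = col_base N *m row_base N by rewrite mulmx_base.
have jac_min : cond_jac N V <-> cond_min N V.
  apply: iff_trans (jac_nonvanishing V NZA LZ AB) _.
  exact: iff_trans (nonvanishingP _) (iff_sym (min_same_sign N V)).
have inj_jac : cond_inj N V <-> cond_jac N V := iff_trans (inj_sig N V) (iff_sym (jac_sig N V)).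
by split; [|split]; [| exact: iff_trans inj_jac jac_min | exact: inj_sig].
Qed.
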